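(* Let $G=(g_1,\dots,g_k)\in\mathbb{N}_0^k$ be telescopic with $g_1>0$ and $c(G)=(c_2,\dots,c_k)$, and let $h_j=c_jg_j$ for $2\le j\le k$. Then $G$ is minimal if and only if $g_i\ne h_j$ for all $i\in\{1,\dots,k\}$ and all $j\in\{2,\dots,k\}$.
   Context: For $G=(g_1,\dots,g_k)\in\mathbb{N}_0^k$, $\langle G\rangle$ is the set of $\mathbb{N}_0$-linear combinations of its entries; $G$ is minimal if $\langle G''\rangle\ne\langle G\rangle$ for every proper subsequence $G''$. Let $G_i=(g_1,\dots,g_i)$, $d_i=\gcd(G_i)$, $c_j=d_{j-1}/d_j$ for $2\le j\le k$ (well defined since $g_1>0$). $G$ is telescopic if $c_jg_j\in\langle G_{j-1}\rangle$ for all $2\le j\le k$. *)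

(* Sequences G = (g_1,...,g_k) are `seq nat`; paper indices
   are 1-based, so g_i = nth 0 G i.-1. *)
From mathcomp Require Import all_boot.
Set Implicit Arguments. Unset Strict Implicit. Unset Printing Implicit Defensive.

Definition gent (G : seq nat) (i : nat) : nat := nth 0 G i.-1.

Definition inGen (G : seq nat) (n : nat) : Prop :=
  exists a : seq nat, size a = size G /\
    n = \sum_(i < size G) nth 0 a i * nth 0 G i.

Definition minimal (G : seq nat) : Prop :=
  forall G2 : seq nat, subseq G2 G -> G2 != G ->
    ~ (forall n, inGen G2 n <-> inGen G n).

Definition prefix_seq (G : seq nat) (i : nat) : seq nat := take i G.

Definition dgcd (G : seq nat) (i : nat) : nat := foldr gcdn 0 (take i G).

Definition cval (G : seq nat) (j : nat) : nat := dgcd G j.-1 %/ dgcd G j.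

Definition telescopic (G : seq nat) : Prop :=
  forall j, 2 <= j <= size G -> inGen (prefix_seq G j.-1) (cval G j * gent G j).

From mathcomp Require Import all_boot.
Set Implicit Arguments. Unset Strict Implicit. Unset Printing Implicit Defensive.

(* A sequence is minimal iff it has no repeated entry and no entry lies in the
   semigroup generated by the others.  If g_i = c_j g_j, then either c_j = 1,
   so g_j lies in <G_(j-1)> by telescopy, or c_j > 1 and g_i is a proper
   multiple of g_j: in both cases some entry is redundant.  Conversely, let
   g_p = b g_m + y be a combination of the other entries, with g_m the last
   one used.  As d_(m-1) divides g_p and y, it divides b g_m, so c_m divides b
   and b g_m is a multiple of h_m, which lies in <G_(m-1)>.  Since h_m <= g_p
   and h_m <> g_p, the entry g_m can be traded for entries of G_(m-1) other
   than g_p.  Descending to m = p gives g_p in <G_(p-1)>, hence d_p = d_(p-1),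
   c_p = 1 and g_p = h_p (or g_1 = 0 when p = 1). *)

Inductive sgen (s : seq nat) : nat -> Prop :=
| sgen0 : sgen s 0
| sgen_addl a x : a \in s -> sgen s x -> sgen s (a + x).

Section Semigroup.
Implicit Types (s t : seq nat) (a b d x y : nat).

Lemma sgen_mem s a : a \in s -> sgen s a.
Proof. by move=> sa; rewrite -[a]addn0; apply: sgen_addl => //; apply: sgen0. Qed.

Lemma sgenD s x y : sgen s x -> sgen s y -> sgen s (x + y).
Proof.
elim=> [|a x' sa _ IHx] sy; first by rewrite add0n.
by rewrite -addnA; apply: sgen_addl => //; apply: IHx.
Qed.

Lemma sgenMl s b x : sgen s x -> sgen s (b * x).
Proof.
move=> sx; elim: b => [|b IHb]; first by rewrite mul0n; apply: sgen0.
by rewrite mulSn; apply: sgenD.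
Qed.

Lemma sgen_trans s t x : {in s, forall a, sgen t a} -> sgen s x -> sgen t x.
Proof.
move=> st; elim=> [|a x' sa _ IHx]; first exact: sgen0.
by apply: sgenD => //; apply: st.
Qed.

Lemma sgen_sub s t x : {subset s <= t} -> sgen s x -> sgen t x.
Proof. by move=> st; apply: sgen_trans => a /st; apply: sgen_mem. Qed.

Lemma sgen_nil x : sgen [::] x -> x = 0.
Proof. by case=> // a y; rewrite in_nil. Qed.

Lemma sgen_cons g s x : sgen (g :: s) x <-> exists b y, x = b * g + y /\ sgen s y.
Proof.
split=> [|[b [y [-> sy]]]].
- elim=> [|a x' sa _ [b [y [-> sy]]]]; first by exists 0, 0; split=> //; apply: sgen0.
  rewrite in_cons in sa; case/orP: sa => [/eqP -> | sa].
  + by exists b.+1, y; rewrite mulSn addnA.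
  + by exists b, (a + y); rewrite addnCA; split=> //; apply: sgen_addl.
- apply: sgenD; first by apply: sgenMl; apply: sgen_mem; rewrite mem_head.
  by apply: sgen_sub sy => z sz; rewrite in_cons sz orbT.
Qed.

Lemma inGen_cons g s x :
  inGen (g :: s) x <-> exists b y, x = b * g + y /\ inGen s y.
Proof.
split=> [[[|a0 a] [//= [size_a ->]]] | [b [y [-> [a [size_a ->]]]]]].
- exists a0, (\sum_(i < size s) nth 0 a i * nth 0 s i).
  by rewrite big_ord_recl; split=> //; exists a.
- by exists (b :: a); rewrite /= size_a big_ord_recl.
Qed.

Lemma inGenP s x : inGen s x <-> sgen s x.
Proof.
elim: s x => [|g s IHs] x.
- split=> [[a [_ ->]] | /sgen_nil ->]; first by rewrite big_ord0; apply: sgen0.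
  by exists [::]; rewrite big_ord0.
- split=> [/inGen_cons | /sgen_cons] [b [y [-> /IHs sy]]].
  + by apply/sgen_cons; exists b, y.
  + by apply/inGen_cons; exists b, y.
Qed.

Lemma sgen_dvd d s x : {in s, forall a, d %| a} -> sgen s x -> d %| x.
Proof.
move=> ds; elim=> [|a x' sa _ IHx]; first exact: dvdn0.
by rewrite dvdn_add // ds.
Qed.

Lemma sgen_filter_lt s a x : sgen s x -> x < a -> sgen [seq y <- s | y != a] x.
Proof.
elim=> [|z x' sz _ IHx] lt_x_a; first exact: sgen0.
apply: sgen_addl; last by apply: IHx; apply: leq_ltn_trans (leq_addl _ _) lt_x_a.
rewrite mem_filter sz andbT; apply: contraTneq lt_x_a => ->.
by rewrite -leqNgt leq_addr.
Qed.

End Semigroup.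

Definition irredundant (s : seq nat) : Prop :=
  {in s, forall a, ~ sgen [seq y <- s | y != a] a}.

Lemma irredundant_gt0 s a : irredundant s -> a \in s -> 0 < a.
Proof.
move=> s_irr sa; rewrite lt0n; apply/eqP => a0.
by apply: (s_irr a sa); rewrite a0; apply: sgen0.
Qed.

Lemma take_subset_filter_nth s p : uniq s -> p < size s ->
  {subset take p s <= [seq y <- s | y != nth 0 s p]}.
Proof.
move=> s_uniq lt_p_s y y_take; rewrite mem_filter (mem_take y_take) andbT.
apply: contraTneq (index_ltn y_take) => ->.
by rewrite index_uniq // ltnn.
Qed.

Lemma minimalP s : minimal s <-> uniq s /\ irredundant s.
Proof.
split=> [s_min | [s_uniq s_irr] t t_sub t_neq t_eq].
- have {}s_min t : subseq t s -> t != s -> ~ {in s, forall a, sgen t a}.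
    move=> t_sub t_neq s_t; apply: (s_min t t_sub t_neq) => n.
    by split=> /inGenP sn; apply/inGenP;
      [apply: sgen_sub (mem_subseq t_sub) sn | apply: sgen_trans sn].
  split.
  + apply/negPn/negP => s_nuniq; apply: (s_min (undup s)); first exact: undup_subseq.
      by apply: contra s_nuniq => /eqP <-; apply: undup_uniq.
    by move=> a; rewrite -mem_undup; apply: sgen_mem.
  + move=> a sa a_red; apply: (s_min [seq y <- s | y != a]); first exact: filter_subseq.
      by apply/eqP => s_eq; move: sa; rewrite -s_eq mem_filter eqxx.
    move=> y sy; have [-> // | y_neq_a] := eqVneq y a.
    by apply: sgen_mem; rewrite mem_filter y_neq_a.
- have lt_t_s : size t < size s.
    have [le_t_s eq_size] := size_subseq_leqif t_sub.
    by rewrite ltn_neqAle le_t_s eq_size andbT.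
  have /allPn [a sa t'a] : ~~ all (mem t) s.
    apply: contraL lt_t_s => /allP s_t.
    by rewrite -leqNgt; apply: uniq_leq_size s_t.
  apply: (s_irr a sa); apply: (sgen_sub (s := t)).
    move=> y ty; rewrite mem_filter (mem_subseq t_sub ty) andbT.
    by apply: contraNneq t'a => <-.
  by apply/inGenP/t_eq/inGenP/sgen_mem.
Qed.

Lemma dvdn_div_gcdl d g b : 0 < gcdn d g -> d %| b * g -> d %/ gcdn d g %| b.
Proof.
move=> e_gt0 d_bg; rewrite -(dvdn_pmul2r e_gt0) divnK ?dvdn_gcdl //.
by rewrite muln_gcdr dvdn_gcd dvdn_mull // gcdnC.
Qed.

Lemma foldr_gcdn_dvd s a : a \in s -> foldr gcdn 0 s %| a.
Proof.
elim: s => //= b s IHs; rewrite in_cons => /orP [/eqP -> | sa].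
- exact: dvdn_gcdl.
- exact: dvdn_trans (dvdn_gcdr _ _) (IHs sa).
Qed.

Lemma dvdn_foldr_gcdn d s : {in s, forall a, d %| a} -> d %| foldr gcdn 0 s.
Proof.
elim: s => [|b s IHs] ds /=; first exact: dvdn0.
rewrite dvdn_gcd ds ?mem_head //=; apply: IHs => a sa.
by apply: ds; rewrite in_cons sa orbT.
Qed.

Section PrefixGcd.
Variable G : seq nat.

Lemma dgcd_dvd q a : a \in take q G -> dgcd G q %| a.
Proof. exact: foldr_gcdn_dvd. Qed.

Lemma dgcd_mono p q : p <= q -> dgcd G q %| dgcd G p.
Proof.
move=> le_pq; apply: dvdn_foldr_gcdn => a; rewrite -(take_takel G le_pq).
by move/mem_take; apply: dgcd_dvd.
Qed.

Lemma dgcdS p : p < size G -> dgcd G p.+1 = gcdn (dgcd G p) (nth 0 G p).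
Proof.
move=> lt_p_G; rewrite /dgcd (take_nth 0 lt_p_G).
by elim: (take p G) => [|b s /= ->]; rewrite /= ?gcdn0 ?gcd0n ?gcdnA.
Qed.

Lemma dgcd_gt0 p : 0 < nth 0 G 0 -> 0 < p -> 0 < dgcd G p.
Proof. by case: G p => [|g s] [|p] //= g_gt0 _; rewrite gcdn_gt0 g_gt0. Qed.

Lemma sgen_dgcd q x : sgen (take q G) x -> dgcd G q %| x.
Proof. by apply: sgen_dvd => a; apply: dgcd_dvd. Qed.

Lemma cval_dvd p b : p < size G -> 0 < dgcd G p.+1 ->
  dgcd G p %| b * nth 0 G p -> cval G p.+1 %| b.
Proof. by move=> lt_p_G; rewrite /cval /= dgcdS //; apply: dvdn_div_gcdl. Qed.

End PrefixGcd.

Definition gen_neq_h (G : seq nat) : Prop :=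
  forall i j, 1 <= i <= size G -> 2 <= j <= size G ->
    gent G i <> cval G j * gent G j.

Section Telescopic.
Variable G : seq nat.
Hypothesis G_tele : telescopic G.

Lemma sgen_telescopic j : 2 <= j <= size G ->
  sgen (take j.-1 G) (cval G j * nth 0 G j.-1).
Proof. by move=> j_range; apply/inGenP/G_tele. Qed.

Lemma uniq_irredundant_gen_neq_h : uniq G -> irredundant G -> gen_neq_h G.
Proof.
move=> G_uniq G_irr i j /andP [i_gt0 le_i_G] /andP [j_gt1 le_j_G]; rewrite /gent.
have gi_in : nth 0 G i.-1 \in G by rewrite mem_nth ?prednK.
have lt_j_G : j.-1 < size G by rewrite prednK // ltnW.
have gj_in : nth 0 G j.-1 \in G by rewrite mem_nth.
move=> gi_eq; have := irredundant_gt0 G_irr gi_in.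
rewrite gi_eq muln_gt0 => /andP [c_gt0 _].
have [c_eq1 | c_gt1] : cval G j = 1 \/ 1 < cval G j.
  by case: (cval G j) c_gt0 => [|[|c]] //; [left | right].
- apply: (G_irr _ gj_in); apply: sgen_sub (take_subset_filter_nth G_uniq lt_j_G) _.
  by rewrite -[nth _ _ _]mul1n -c_eq1; apply: sgen_telescopic; rewrite j_gt1.
- apply: (G_irr _ gi_in); rewrite gi_eq; apply: sgenMl; apply: sgen_mem.
  by rewrite mem_filter gj_in andbT neq_ltn ltn_Pmull ?(irredundant_gt0 G_irr).
Qed.

Hypotheses (G_head_gt0 : 0 < nth 0 G 0) (G_h : gen_neq_h G).

Lemma nth_notin_sgen_take p : p < size G -> ~ sgen (take p G) (nth 0 G p).
Proof.
case: p => [|p] lt_p_G gp_sgen.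
  by rewrite take0 in gp_sgen; move: G_head_gt0; rewrite (sgen_nil gp_sgen).
have c_eq1 : cval G p.+2 = 1.
  by rewrite /cval /= (dgcdS (p := p.+1)) // (gcdn_idPl (sgen_dgcd gp_sgen)) divnn dgcd_gt0.
by apply: (@G_h p.+2 p.+2); rewrite /= ?lt_p_G // c_eq1 mul1n.
Qed.

Lemma gen_neq_h_uniq : uniq G.
Proof.
apply/negPn/negP => /(uniqPn 0) [i [j [lt_ij lt_j_G gi_eq]]].
apply: (nth_notin_sgen_take lt_j_G); apply: sgen_mem.
by rewrite -gi_eq -(nth_take 0 lt_ij) mem_nth // size_take lt_j_G.
Qed.

(* Indices are 0-based here: [nth 0 G m] is g_(m+1), traded for
   h_(m+1) = [cval G m.+1 * nth 0 G m]. *)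
Lemma sgen_filter_take_descend p m : p < m < size G ->
  sgen [seq y <- take m.+1 G | y != nth 0 G p] (nth 0 G p) ->
  sgen [seq y <- take m G | y != nth 0 G p] (nth 0 G p).
Proof.
move=> /andP [lt_pm lt_m_G]; set a := nth 0 G p => a_sgen.
have m_gt0 : 0 < m := leq_ltn_trans (leq0n p) lt_pm.
have [b [y [a_eq y_sgen]]] :
    exists b y, a = b * nth 0 G m + y /\ sgen [seq y <- take m G | y != a] y.
  apply/sgen_cons; apply: sgen_sub a_sgen => z.
  rewrite (take_nth 0 lt_m_G) filter_rcons; case: ifP => _; rewrite ?mem_rcons //.
  by move=> z_in; rewrite in_cons z_in orbT.
have dm_a : dgcd G m %| a.
  apply: dvdn_trans (dgcd_mono G lt_pm) (dgcd_dvd _).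
  by rewrite (take_nth 0 (ltn_trans lt_pm lt_m_G)) mem_rcons mem_head.
have dm_y : dgcd G m %| y.
  by apply: sgen_dvd y_sgen => z; rewrite mem_filter => /andP [_]; apply: dgcd_dvd.
have /dvdnP [q b_eq] : cval G m.+1 %| b.
  apply: cval_dvd; rewrite ?dgcd_gt0 //.
  by rewrite -(dvdn_addl _ dm_y) -a_eq.
rewrite [X in sgen _ X]a_eq b_eq -mulnA; apply: sgenD y_sgen.
case: q b_eq => [|q] b_eq; first by rewrite mul0n; apply: sgen0.
apply: sgenMl; apply: sgen_filter_lt.
  by apply: (@sgen_telescopic m.+1); apply/andP; split.
rewrite ltn_neqAle; apply/andP; split.
- apply/eqP => h_eq; apply: (@G_h p.+1 m.+1) (esym h_eq).
    by rewrite /= (ltn_trans lt_pm lt_m_G).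
  by apply/andP; split.
- by rewrite a_eq b_eq -mulnA mulSn -addnA leq_addr.
Qed.

Lemma gen_neq_h_irredundant : irredundant G.
Proof.
move=> a a_in; rewrite -(nth_index 0 a_in); set p := index a G.
have lt_p_G : p < size G by rewrite index_mem.
suff descend m : p < m <= size G ->
    sgen [seq y <- take m G | y != nth 0 G p] (nth 0 G p) -> sgen (take p G) (nth 0 G p).
  move=> a_red; apply: (nth_notin_sgen_take lt_p_G); apply: (descend (size G)).
    by rewrite lt_p_G leqnn.
  by rewrite take_size.
elim: m => [// | m IHm] /andP [le_pm lt_m_G] a_sgen.
case: (eqVneq p m) => [eq_pm | ne_pm].
- move: a_sgen; rewrite -eq_pm (take_nth 0 lt_p_G) filter_rcons eqxx.
  by apply: sgen_sub => z; rewrite mem_filter => /andP [].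
have lt_pm : p < m by rewrite ltn_neqAle ne_pm.
apply: IHm; first by rewrite lt_pm ltnW.
by apply: sgen_filter_take_descend; rewrite ?lt_pm.
Qed.

End Telescopic.

Theorem mainTheorem5 (G : seq nat) :
  0 < size G -> 0 < gent G 1 -> telescopic G ->
  (minimal G <->
   (forall i j, 1 <= i <= size G -> 2 <= j <= size G ->
      gent G i <> cval G j * gent G j)).
Proof.
move=> _ G_head_gt0 G_tele; apply: iff_trans (minimalP G) _; split=> [[G_uniq G_irr] | G_h].
- exact: uniq_irredundant_gen_neq_h.
- by split; [apply: gen_neq_h_uniq | apply: gen_neq_h_irredundant].
Qed.
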